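(* Let $A$ be an abelian group and $B$ a subgroup of $A$ such that $A/B$ is finite and $l$-torsion. Let $R = \mathbb{Z}[1/l]$ and let $M$ be an $RA$-module. Then for every $n \ge 0$ the natural maps \[ H_n(A, M_B) \to H_n(A, M_A), \qquad H^n(A, M^A) \to H^n(A, M^B) \] are isomorphisms.
   Context: For a group $G$ and a $G$-module $M$, $M_G := M/\langle m - gm \mid g \in G, m \in M\rangle$ (coinvariants) and $M^G := \{m \in M \mid gm = m \ \forall g\in G\}$ (invariants). Since $A$ is abelian, $M_B$ and $M^B$ are $A$-modules, and the maps above are induced by the natural $A$-module maps $M_B \to M_A$ and $M^A \to M^B$. Here $l$ is a positive integer and an abelian group is $l$-torsion if every element is annihilated by $l$. *)

(* Group (co)homology of an abelian group A (written
   additively as a zmodType) with coefficients in an A-module M, computed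
   from the standard inhomogeneous bar complex. *)
From HB Require Import structures.
From mathcomp Require Import all_boot all_order all_algebra.
Set Implicit Arguments. Unset Strict Implicit. Unset Printing Implicit Defensive.
Import GRing.Theory.
Local Open Scope ring_scope.

Section BarComplex.
Variables (A M : zmodType) (act : A -> M -> M).

Definition merge_at (i : nat) (x : seq A) : seq A :=
  take i x ++ (nth 0 x i + nth 0 x i.+1) :: drop i.+2 x.

Definition sgn (k : nat) (m : M) : M := if odd k then - m else m.

(* A chain is a finite formal sum, represented by a list of terms; its value
   is the finitely supported function (seq A) -> M it defines. *)
Definition eval_ch (c : seq (seq A * M)) (y : seq A) : M :=
  \sum_(p <- c | p.1 == y) p.2.

Definition chain_deg (n : nat) (c : seq (seq A * M)) : bool :=
  all (fun p => size p.1 == n) c.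

(* d(m[x_1|..|x_n]) = x_1^{-1} m [x_2|..|x_n]
      + sum_{i=1}^{n-1} (-1)^i m[..|x_i x_{i+1}|..] + (-1)^n m[x_1|..|x_{n-1}] *)
Definition bd_term (p : seq A * M) : seq (seq A * M) :=
  let x := p.1 in let m := p.2 in
  match size x with
  | 0 => [::]
  | n.+1 =>
      (behead x, act (- head 0 x) m)
        :: [seq (merge_at i x, sgn i.+1 m) | i <- iota 0 n]
        ++ [:: (take n x, sgn n.+1 m)]
  end.

Definition bd (c : seq (seq A * M)) : seq (seq A * M) := flatten (map bd_term c).

(* Homology with coefficients in M/D (D an A-submodule, given as a predicate):
   relative cycles and boundaries modulo D. *)
Definition rel_cycle (D : M -> Prop) (n : nat) (c : seq (seq A * M)) : Prop :=
  chain_deg n c /\ forall y, D (eval_ch (bd c) y).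

Definition bdry_mod (D : M -> Prop) (n : nat) (c : seq (seq A * M)) : Prop :=
  exists e, chain_deg n.+1 e /\ forall y, D (eval_ch c y - eval_ch (bd e) y).

(* The map H_n(A, M/D1) -> H_n(A, M/D2) induced by the projection
   M/D1 -> M/D2 (for D1 <= D2) is bijective. *)
Definition homology_map_iso (D1 D2 : M -> Prop) (n : nat) : Prop :=
  (forall c, rel_cycle D1 n c -> bdry_mod D2 n c -> bdry_mod D1 n c) /\
  (forall c, rel_cycle D2 n c ->
     exists c', rel_cycle D1 n c' /\
       exists e, chain_deg n.+1 e /\
         forall y, D2 (eval_ch c y - eval_ch c' y - eval_ch (bd e) y)).

(* (df)(x_1,..,x_{n+1}) = x_1 f(x_2,..) + sum_{i=1}^n (-1)^i f(..,x_i x_{i+1},..)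
                          + (-1)^{n+1} f(x_1,..,x_n) *)
Definition dco (f : seq A -> M) (x : seq A) : M :=
  let n := (size x).-1 in
  act (head 0 x) (f (behead x))
  + \sum_(i < n) sgn i.+1 (f (merge_at i x))
  + sgn n.+1 (f (take n x)).

Definition valued_in (P : M -> Prop) (n : nat) (f : seq A -> M) : Prop :=
  forall x, size x = n -> P (f x).

Definition cocycle (n : nat) (f : seq A -> M) : Prop :=
  forall x, size x = n.+1 -> dco f x = 0.

Definition cobdry (P : M -> Prop) (n : nat) (f : seq A -> M) : Prop :=
  match n with
  | 0 => forall x, size x = 0 -> f x = 0
  | k.+1 => exists g, valued_in P k g /\ forall x, size x = k.+1 -> f x = dco g x
  end.

(* The map H^n(A, P1) -> H^n(A, P2) induced by the inclusion P1 <= P2 of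
   A-submodules of M is bijective. *)
Definition cohomology_map_iso (P1 P2 : M -> Prop) (n : nat) : Prop :=
  (forall f, valued_in P1 n f -> cocycle n f -> cobdry P2 n f -> cobdry P1 n f) /\
  (forall f, valued_in P2 n f -> cocycle n f ->
     exists f', valued_in P1 n f' /\ cocycle n f' /\
                cobdry P2 n (fun x => f x - f' x)).

(* the subgroup <m - b m | b in B, m in M>, so that M_B = M / coinv_rel B *)
Definition coinv_rel (B : pred A) (x : M) : Prop :=
  exists s : seq (A * M), all (fun p => p.1 \in B) s /\
                          x = \sum_(p <- s) (p.2 - act p.1 p.2).

Definition invariants (B : pred A) (m : M) : Prop :=
  forall b, b \in B -> act b m = m.

End BarComplex.

(* Let s be representatives of A modulo B. For r in A, the operator
   average r = (1/l) \sum_(j < l) r^j on M is additive and A-equivariant,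
   fixes M^A, and maps (1 - r) M into I_B M = <m - b m | b in B> because
   r^l lies in B. Hence the composite P of the averages over s maps I_A M
   into I_B M and M^B into M^A, while P m - m lies in I_A M. Moreover, since
   A is abelian, every a in A acts trivially on the (co)homology of A: the
   insertion of a into bars is a chain homotopy between the action of a and
   the identity on the bar complex. So P acts as the identity on (co)homology
   and provides the inverses of both natural maps. *)

From HB Require Import structures.
From mathcomp Require Import all_boot all_order all_algebra.
Set Implicit Arguments.
Unset Strict Implicit.
Unset Printing Implicit Defensive.

Import GRing.Theory.
Local Open Scope ring_scope.

Lemma abelian_cancel_step (V : zmodType) (t s r r' : V) :
  s = - t -> r = s + r' -> r' = 0 -> t + r = 0.
Proof. by move=> -> -> ->; rewrite addr0 subrr. Qed.

Lemma abelian_pull_step (V : zmodType) (h r0 s r1 : V) :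
  r0 = s + r1 -> h + r0 = s + (h + r1).
Proof. by move=> ->; rewrite addrCA. Qed.

Ltac abelian_pull :=
  first [ exact: erefl | apply: addrC | (apply: abelian_pull_step; abelian_pull) ].

Ltac abelian_cancel :=
  match goal with
  | |- 0 = 0 => reflexivity
  | |- ?t + ?r = 0 =>
      let s := match t with - ?u => u | _ => constr:(- t) end in
      first [ apply: (@abelian_cancel_step _ t s r 0);
                [ first [exact: erefl | by rewrite opprK] | by rewrite addr0 | reflexivity ]
            | apply: (@abelian_cancel_step _ t s);
                [ first [exact: erefl | by rewrite opprK] | abelian_pull | abelian_cancel ] ]
  end.

(* Proves an identity between signed sums in a zmodType: move everything to
   one side and cancel each summand against an opposite one found further right. *)
Ltac abelian :=
  apply/eqP; rewrite -subr_eq0; apply/eqP; rewrite ?opprD ?opprK -?addrA ?addr0 ?add0r;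
  abelian_cancel.

Section AdditiveFun.
Variables (U V : zmodType) (f : U -> V).
Hypothesis fD : {morph f : x y / x + y}.

Lemma additive_fun0 : f 0 = 0.
Proof. by apply: (addrI (f 0)); rewrite -fD !addr0. Qed.

Lemma additive_funN : {morph f : x / - x}.
Proof. by move=> x; apply: (addrI (f x)); rewrite -fD !subrr additive_fun0. Qed.

Lemma additive_fun_sum (I : Type) (r : seq I) (P : pred I) (F : I -> U) :
  f (\sum_(i <- r | P i) F i) = \sum_(i <- r | P i) f (F i).
Proof. exact: (big_morph f fD additive_fun0). Qed.

Lemma additive_fun_sgn k x : f (sgn k x) = sgn k (f x).
Proof. by rewrite /sgn; case: (odd k); rewrite ?additive_funN. Qed.

End AdditiveFun.

Lemma sgnS (M : zmodType) k (m : M) : sgn k.+1 m = - sgn k m.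
Proof. by rewrite /sgn /=; case: (odd k); rewrite ?opprK. Qed.

Lemma sgnD (M : zmodType) k : {morph @sgn M k : x y / x + y}.
Proof. by move=> x y; rewrite /sgn; case: (odd k); rewrite ?opprD. Qed.

Lemma sgn0 (M : zmodType) k : sgn k (0 : M) = 0.
Proof. exact: additive_fun0 (sgnD k). Qed.

Lemma sum_iota0_ord (V : zmodType) n (F : nat -> V) :
  \sum_(i <- iota 0 n) F i = \sum_(i < n) F i.
Proof. by rewrite -(big_mkord xpredT) /index_iota subn0. Qed.

Section BarHomotopy.
Variables (A M : zmodType).
Implicit Types (f g : seq A -> M) (x y : seq A) (psi : A -> M -> M).

(* [tail_faces f x = \sum_(1 <= i <= n) (-1)^i f (d_i x)] for the faces [d_i]
   of the bar [x_1|...|x_n]; the face [d_0] involves the action and is added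
   separately in [bar_diff]. *)
Fixpoint tail_faces f x : M :=
  match x with
  | [::] => 0
  | u :: y => match y with
              | [::] => - f [::]
              | v :: z => - f ((u + v) :: z) - tail_faces (fun w => f (u :: w)) y
              end
  end.

Lemma tail_faces_cons2 f u v z : tail_faces f [:: u, v & z] =
  - f ((u + v) :: z) - tail_faces (fun w => f (u :: w)) (v :: z).
Proof. by []. Qed.

Lemma tail_facesD f g x :
  tail_faces (fun w => f w + g w) x = tail_faces f x + tail_faces g x.
Proof.
elim: x f g => [|u y IH] f g /=; first by rewrite addr0.
case: y IH => [|v z] IH; first by rewrite opprD.
by rewrite IH !opprD addrACA.
Qed.

Lemma tail_facesN f x : tail_faces (fun w => - f w) x = - tail_faces f x.
Proof.
elim: x f => [|u y IH] f /=; first by rewrite oppr0.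
by case: y IH => [|v z] IH //; rewrite IH opprD.
Qed.

Lemma tail_facesE f u y : tail_faces f (u :: y) =
  \sum_(i < size y) sgn i.+1 (f (merge_at i (u :: y)))
  + sgn (size y).+1 (f (take (size y) (u :: y))).
Proof.
elim: y u f => [|v z IH] u f; first by rewrite big_ord0 add0r.
rewrite tail_faces_cons2 IH [size (v :: z)]/= big_ord_recl.
have -> : merge_at ord0 [:: u, v & z] = (u + v) :: z by rewrite /merge_at /= drop0.
rewrite [in RHS](eq_bigr (fun i : 'I_(size z) => - sgn i.+1 (f (u :: merge_at i (v :: z))))).
  by rewrite sumrN [sgn (size z).+2 _]sgnS [sgn 1 _]/sgn /=; abelian.
by move=> i _; rewrite /bump /= sgnS.
Qed.

Lemma eq_tail_faces f g x : f =1 g -> tail_faces f x = tail_faces g x.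
Proof.
elim: x f g => [|u y IH] f g fg //=.
case: y IH => [|v z] IH; first by rewrite fg.
by rewrite fg (IH _ (fun w => g (u :: w))).
Qed.

Definition head_face psi f x : M := if x is u :: y then psi u (f y) else 0.

Definition bar_diff psi f x : M := head_face psi f x + tail_faces f x.

Lemma eq_bar_diff psi f g x : f =1 g -> bar_diff psi f x = bar_diff psi g x.
Proof. by case: x => [|u y] fg; rewrite /bar_diff (eq_tail_faces _ fg) //= fg. Qed.

Lemma bar_diffD psi f g x : (forall u, {morph psi u : m1 m2 / m1 + m2}) ->
  bar_diff psi (fun w => f w + g w) x = bar_diff psi f x + bar_diff psi g x.
Proof.
by case: x => [|u y] psiD; rewrite /bar_diff tail_facesD /= ?psiD addrACA ?addr0.
Qed.

Lemma bar_diff_morph psi (phi : M -> M) f x : {morph phi : m1 m2 / m1 + m2} ->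
  (forall u m, phi (psi u m) = psi u (phi m)) ->
  bar_diff psi (fun w => phi (f w)) x = phi (bar_diff psi f x).
Proof.
move=> phiD phipsi; rewrite /bar_diff phiD; congr (_ + _).
  by case: x => [|u y] /=; rewrite ?(additive_fun0 phiD) ?phipsi.
elim: x f => [|u y IH] f /=; first by rewrite (additive_fun0 phiD).
case: y IH => [|v z] IH; first by rewrite (additive_funN phiD).
by rewrite (IH (fun w => f (u :: w))) phiD !(additive_funN phiD).
Qed.

Section InsertSum.
Variable a : A.

(* [insert_sum f x = \sum_i (-1)^i f [x_1|..|x_i|a|x_(i+1)|..|x_n]] *)
Fixpoint insert_sum f x : M :=
  match x with
  | [::] => f [:: a]
  | u :: y => f (a :: x) - insert_sum (fun w => f (u :: w)) y
  end.

Lemma insert_sum_cons f u y :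
  insert_sum f (u :: y) = f [:: a, u & y] - insert_sum (fun w => f (u :: w)) y.
Proof. by []. Qed.

Lemma insert_sum_ext f g x :
  (forall w, size w = (size x).+1 -> f w = g w) -> insert_sum f x = insert_sum g x.
Proof.
elim: x f g => [|u y IH] f g fg /=; first by rewrite fg.
by rewrite fg //; congr (_ - _); apply: IH => w sw; apply: fg; rewrite /= sw.
Qed.

Lemma insert_sum_morph (phi : M -> M) f x : {morph phi : m1 m2 / m1 + m2} ->
  insert_sum (fun w => phi (f w)) x = phi (insert_sum f x).
Proof.
move=> phiD; elim: x f => [|u y IH] f //=.
by rewrite (IH (fun w => f (u :: w))) phiD (additive_funN phiD).
Qed.

Lemma insert_sumD f g x :
  insert_sum (fun w => f w + g w) x = insert_sum f x + insert_sum g x.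
Proof. by elim: x f g => [|u y IH] f g //=; rewrite IH opprD addrACA. Qed.

Lemma insert_sumN f x : insert_sum (fun w => - f w) x = - insert_sum f x.
Proof. by elim: x f => [|u y IH] f //=; rewrite IH opprD. Qed.

Lemma insert_sum_head_face psi f x : (forall u, {morph psi u : m1 m2 / m1 + m2}) ->
  insert_sum (head_face psi f) x + head_face psi (insert_sum f) x = psi a (f x).
Proof.
case: x => [|u y] psiD /=; first by rewrite addr0.
by rewrite (insert_sum_morph f y (psiD u)) subrK.
Qed.

Lemma insert_sum_tail_faces f x :
  insert_sum (tail_faces f) x + tail_faces (insert_sum f) x = - f x.
Proof.
elim: x f => [|u [|v z] IH] f; first by rewrite /= addr0.
  by rewrite /= (addrC u a); abelian.
set y := v :: z.
have E1 : insert_sum (fun w => tail_faces f (u :: w)) y =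
          insert_sum (fun w => - f ((u + head 0 w) :: behead w)) y
          - insert_sum (tail_faces (fun w => f (u :: w))) y.
  by rewrite -insert_sumN -insert_sumD; apply: insert_sum_ext => -[|w0 w].
have E1' : insert_sum (fun w => - f ((u + head 0 w) :: behead w)) y =
           - f ((u + a) :: y) + insert_sum (fun w => f ((u + v) :: w)) z.
  by rewrite /= insert_sumN opprK.
have E2 : tail_faces (fun w => insert_sum f (u :: w)) y =
          tail_faces (fun w => f (a :: u :: w)) y
          - tail_faces (insert_sum (fun w => f (u :: w))) y.
  by rewrite -tail_facesN -tail_facesD.
have := IH (fun w => f (u :: w)); rewrite -/y => IHu.
rewrite insert_sum_cons /y [tail_faces (insert_sum f) _]tail_faces_cons2 -/y.
rewrite E1 E1' E2 -{}IHu /y !tail_faces_cons2 -/y insert_sum_cons (addrC u a).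
by abelian.
Qed.

(* The chain homotopy behind the triviality of the conjugation action of an
   abelian group on its own (co)homology. *)
Lemma bar_diff_insert_sum psi f x : (forall u, {morph psi u : m1 m2 / m1 + m2}) ->
  bar_diff psi (insert_sum f) x + insert_sum (bar_diff psi f) x = psi a (f x) - f x.
Proof.
move=> psiD; rewrite /bar_diff insert_sumD.
rewrite -(@insert_sum_head_face psi f x psiD) -(insert_sum_tail_faces f x).
by abelian.
Qed.

Lemma insert_sum_eq0 f x :
  (forall w, size w = (size x).+1 -> f w = 0) -> insert_sum f x = 0.
Proof.
elim: x f => [|u y IH] f f0 /=; first by rewrite f0.
by rewrite f0 // IH ?subr0 // => w sw; apply: f0; rewrite /= sw.
Qed.

Lemma insert_sum_closed (P : M -> Prop) f x :
  (forall m1 m2, P m1 -> P m2 -> P (m1 - m2)) ->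
  (forall w, size w = (size x).+1 -> P (f w)) -> P (insert_sum f x).
Proof.
move=> PB; elim: x f => [|u y IH] f Pf /=; first exact: Pf.
by apply: PB; [apply: Pf | apply: IH => w sw; apply: Pf; rewrite /= sw].
Qed.

Definition insert_at i x := take i x ++ a :: drop i x.

Lemma size_insert_at i x : size (insert_at i x) = (size x).+1.
Proof. by rewrite /insert_at size_cat /= addnS -size_cat cat_take_drop. Qed.

Lemma insert_sumE f x :
  insert_sum f x = \sum_(i <- iota 0 (size x).+1) sgn i (f (insert_at i x)).
Proof.
elim: x f => [|u y IH] f; first by rewrite /= big_seq1.
rewrite insert_sum_cons -[iota 0 (size (u :: y)).+1]/(0%N :: iota (1 + 0) (size y).+1).
rewrite [in RHS]big_cons iotaDl big_map IH.
congr (_ + _); rewrite -sumrN; apply: eq_bigr => i _.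
by rewrite add1n sgnS.
Qed.

End InsertSum.

End BarHomotopy.

Section ZmodAction.
Variables (A M : zmodType) (act : A -> M -> M) (l : nat) (inv : M -> M).
Hypotheses (actD : forall a, {morph act a : x y / x + y})
  (act0 : forall x, act 0 x = x)
  (actM : forall a b x, act (a + b) x = act a (act b x))
  (invK : cancel (fun m => m *+ l) inv) (mulrnK : cancel inv (fun m => m *+ l)).

Lemma actr0 a : act a 0 = 0.
Proof. exact: additive_fun0. Qed.

Lemma actrN a : {morph act a : x / - x}.
Proof. exact: additive_funN. Qed.

Lemma act_comm a b m : act a (act b m) = act b (act a m).
Proof. by rewrite -!actM addrC. Qed.

Definition Amorphism (phi : M -> M) :=
  {morph phi : x y / x + y} /\ forall a m, phi (act a m) = act a (phi m).

Lemma Amorphism_opp : Amorphism (fun m => - m).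
Proof. by split => [x y|a m]; [exact: opprD | rewrite actrN]. Qed.

Lemma Amorphism_comp phi psi :
  Amorphism phi -> Amorphism psi -> Amorphism (fun m => phi (psi m)).
Proof. by move=> [phiD phiA] [psiD psiA]; split => [x y|a m]; rewrite ?psiD ?psiA. Qed.

Lemma Amorphism_ext phi psi : phi =1 psi -> Amorphism phi -> Amorphism psi.
Proof. by move=> eq_phi [phiD phiA]; split => [x y|a m]; rewrite -!eq_phi ?phiD ?phiA. Qed.

Definition orbit_sum (r : A) (k : nat) (m : M) : M := \sum_(j < k) act (r *+ j) m.

Definition average (r : A) (m : M) : M := inv (orbit_sum r l m).

Definition average_seq (t : seq A) (m : M) : M := foldr average m t.

Lemma Amorphism_inv : Amorphism inv.
Proof.
have mull_inj : injective (fun m : M => m *+ l) by apply: can_inj invK.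
split => [x y|a m]; apply: mull_inj => /=; first by rewrite mulrnDl !mulrnK.
rewrite mulrnK -[in LHS](mulrnK m).
elim: l => [|k IH]; first by rewrite !mulr0n actr0.
by rewrite !mulrSr actD IH.
Qed.

Lemma Amorphism_orbit_sum r k : Amorphism (orbit_sum r k).
Proof.
split => [x y|a m]; rewrite /orbit_sum.
  by rewrite -big_split; apply: eq_bigr => j _; exact: actD.
by rewrite (additive_fun_sum (actD a)); apply: eq_bigr => j _; exact: act_comm.
Qed.

Lemma Amorphism_average r : Amorphism (average r).
Proof. exact: Amorphism_comp Amorphism_inv (Amorphism_orbit_sum r l). Qed.

Lemma Amorphism_average_seq t : Amorphism (average_seq t).
Proof.
elim: t => [|r t IH]; first by split.
exact: Amorphism_comp (Amorphism_average r) IH.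
Qed.

Lemma orbit_sum_sub_act r m :
  orbit_sum r l m - act r (orbit_sum r l m) = m - act (r *+ l) m.
Proof.
rewrite -(Amorphism_orbit_sum r l).2 /orbit_sum -sumrB.
rewrite (eq_bigr (fun j : 'I_l => act (r *+ j) m - act (r *+ j.+1) m)); last first.
  by move=> j _; rewrite -actM mulrSr.
rewrite -(big_mkord xpredT (fun j => act (r *+ j) m - act (r *+ j.+1) m)).
rewrite (telescope_sumr_eq (fun j => - act (r *+ j) m)) // => [|j _].
  by rewrite mulr0n act0 opprK addrC.
by rewrite opprK addrC.
Qed.

Lemma average_seq_invariant t m : invariants act predT m -> average_seq t m = m.
Proof.
move=> mA; elim: t => [|r t IH] //=; rewrite IH /average /orbit_sum.
by rewrite (eq_bigr (fun _ => m)) => [|j _]; rewrite ?mA // sumr_const card_ord invK.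
Qed.

Section Chains.
Local Notation chain := (seq (seq A * M)).
Implicit Types (c d e : chain) (x y : seq A) (b : A).

(* Chain-level identities are obtained by duality: pairing a chain against
   coefficient functionals turns them into the cochain-level identities for
   [bar_diff] and [insert_sum]. *)
Definition pairing c (Phi : seq A -> M -> M) : M := \sum_(p <- c) Phi p.1 p.2.

Definition coef_at y x (m : M) : M := if x == y then m else 0.

Definition map_chain (phi : M -> M) c : chain := [seq (p.1, phi p.2) | p <- c].

Definition insert_term b (p : seq A * M) : chain :=
  [seq (insert_at b i p.1, sgn i p.2) | i <- iota 0 (size p.1).+1].

Definition chain_insert b c : chain := flatten (map (insert_term b) c).

Lemma eval_chE c y : eval_ch c y = pairing c (coef_at y).
Proof. by rewrite /eval_ch /pairing big_mkcond. Qed.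

Lemma pairing_flatten (g : seq A * M -> chain) c Phi :
  pairing (flatten (map g c)) Phi = pairing c (fun x m => pairing (g (x, m)) Phi).
Proof. by rewrite /pairing big_flatten big_map; apply: eq_bigr => -[x m]. Qed.

Lemma Amorphism_coef_at y x : Amorphism (coef_at y x).
Proof. by split => [m1 m2|a m]; rewrite /coef_at; case: (x == y); rewrite ?addr0 ?actr0. Qed.

Lemma eval_bd_nil y : eval_ch (bd act [::]) y = 0.
Proof. by rewrite /eval_ch big_nil. Qed.

Lemma eval_ch_cat c d y : eval_ch (c ++ d) y = eval_ch c y + eval_ch d y.
Proof. by rewrite /eval_ch big_cat. Qed.

Lemma bd_cat c d : bd act (c ++ d) = bd act c ++ bd act d.
Proof. by rewrite /bd map_cat flatten_cat. Qed.

Lemma eval_ch_map (phi : M -> M) c y :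
  {morph phi : m1 m2 / m1 + m2} -> eval_ch (map_chain phi c) y = phi (eval_ch c y).
Proof. by move=> phiD; rewrite /eval_ch /map_chain big_map (additive_fun_sum phiD). Qed.

Lemma bd_map_chain phi c : Amorphism phi -> bd act (map_chain phi c) = map_chain phi (bd act c).
Proof.
move=> [phiD phiA]; rewrite /bd /map_chain map_flatten -!map_comp; congr flatten.
apply: eq_map => -[x m]; rewrite /bd_term /=; case: (size x) => [|n] //=.
rewrite phiA map_cat -map_comp /= (additive_fun_sgn phiD); congr (_ :: _ ++ _).
by apply: eq_map => i /=; rewrite (additive_fun_sgn phiD).
Qed.

Lemma chain_deg_map n phi c : chain_deg n (map_chain phi c) = chain_deg n c.
Proof. by rewrite /chain_deg /map_chain all_map. Qed.

Lemma chain_deg_cat n c d : chain_deg n (c ++ d) = chain_deg n c && chain_deg n d.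
Proof. by rewrite /chain_deg all_cat. Qed.

Lemma chain_deg_insert n b c : chain_deg n c -> chain_deg n.+1 (chain_insert b c).
Proof.
move=> /allP cn; apply/allP => p /flatten_mapP [q /cn /eqP qn /mapP [i _ ->]].
by rewrite /= size_insert_at qn.
Qed.

Lemma pairing_bd_term Phi x m : (forall z, Amorphism (Phi z)) ->
  pairing (bd_term act (x, m)) Phi = bar_diff (fun u => act (- u)) (fun z => Phi z m) x.
Proof.
move=> PhiA; case: x => [|u y]; first by rewrite /pairing /bar_diff /= big_nil addr0.
rewrite /pairing /bd_term [size _]/= big_cons big_cat big_map big_seq1 /=.
rewrite (PhiA _).2 /bar_diff /head_face tail_facesE; congr (_ + (_ + _)).
  rewrite sum_iota0_ord.
  by apply: eq_bigr => i _; rewrite (additive_fun_sgn (PhiA _).1).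
by rewrite (additive_fun_sgn (PhiA _).1).
Qed.

Lemma pairing_insert_term b Phi x m : (forall z, {morph Phi z : m1 m2 / m1 + m2}) ->
  pairing (insert_term b (x, m)) Phi = insert_sum b (fun z => Phi z m) x.
Proof.
move=> PhiD; rewrite /pairing big_map insert_sumE; apply: eq_bigr => i _ /=.
by rewrite (additive_fun_sgn (PhiD _)).
Qed.

Lemma Amorphism_insert_sum b Phi x : (forall z, Amorphism (Phi z)) ->
  Amorphism (fun m => insert_sum b (fun z => Phi z m) x).
Proof.
move=> PhiA; split => [m1 m2|a m].
  by rewrite -insert_sumD; apply: insert_sum_ext => z _; rewrite (PhiA z).1.
rewrite -(insert_sum_morph b _ _ (actD a)).
by apply: insert_sum_ext => z _; rewrite (PhiA z).2.
Qed.

Lemma Amorphism_bar_diff Phi x : (forall z, Amorphism (Phi z)) ->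
  Amorphism (fun m => bar_diff (fun u => act (- u)) (fun z => Phi z m) x).
Proof.
move=> PhiA; split => [m1 m2|a m].
  rewrite -bar_diffD //; apply: eq_bar_diff => z; exact: (PhiA z).1.
rewrite -(bar_diff_morph _ _ (actD a) (fun u => act_comm a (- u))).
by apply: eq_bar_diff => z; rewrite (PhiA z).2.
Qed.

Lemma Amorphism_pairing_bd_term Phi x : (forall z, Amorphism (Phi z)) ->
  Amorphism (fun m => pairing (bd_term act (x, m)) Phi).
Proof.
move=> PhiA; apply: Amorphism_ext (Amorphism_bar_diff x PhiA) => m.
by rewrite pairing_bd_term.
Qed.

Lemma Amorphism_pairing_insert_term b Phi x : (forall z, Amorphism (Phi z)) ->
  Amorphism (fun m => pairing (insert_term b (x, m)) Phi).
Proof.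
move=> PhiA; apply: Amorphism_ext (Amorphism_insert_sum b x PhiA) => m.
by rewrite pairing_insert_term // => z; exact: (PhiA z).1.
Qed.

Lemma eval_bd_chain_insert b c y :
  eval_ch (bd act (chain_insert b c)) y + eval_ch (chain_insert b (bd act c)) y
  = act (- b) (eval_ch c y) - eval_ch c y.
Proof.
rewrite !eval_chE /bd /chain_insert !pairing_flatten /pairing.
rewrite (additive_fun_sum (actD (- b))) -big_split -sumrB; apply: eq_bigr => -[x m] _ /=.
change (pairing (insert_term b (x, m)) (fun z m' => pairing (bd_term act (z, m')) (coef_at y))
  + pairing (bd_term act (x, m)) (fun z m' => pairing (insert_term b (z, m')) (coef_at y))
  = act (- b) (coef_at y x m) - coef_at y x m).
have coefA := Amorphism_coef_at y.
rewrite pairing_insert_term => [|z]; last exact: (Amorphism_pairing_bd_term z coefA).1.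
rewrite pairing_bd_term => [|z]; last exact: Amorphism_pairing_insert_term.
rewrite -(bar_diff_insert_sum b (psi := fun u => act (- u)) (fun w => coef_at y w m)) => [|u];
  last exact: actD.
rewrite addrC; congr (_ + _).
  by apply: eq_bar_diff => z; rewrite pairing_insert_term // => w; exact: (coefA w).1.
by apply: insert_sum_ext => z _; rewrite pairing_bd_term.
Qed.

Lemma sum_by_coef d (P : pred (seq A)) :
  \sum_(p <- d | P p.1) p.2 = \sum_(z <- undup (map fst d) | P z) eval_ch d z.
Proof.
rewrite /eval_ch (eq_bigr _ (fun z _ => big_mkcond _ _)) exchange_big /= big_mkcond.
apply: eq_big_seq => p pd; rewrite -big_mkcondr big_mkcond.
rewrite (bigD1_seq p.1) ?undup_uniq ?mem_undup ?map_f //= eqxx andbT big1 ?addr0 //.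
by move=> z; rewrite eq_sym => /negbTE ->; rewrite andbF.
Qed.

Lemma eval_chain_insert b d y : eval_ch (chain_insert b d) y =
  \sum_(i < size y) sgn i (\sum_(p <- d | (i <= size p.1)%N && (insert_at b i p.1 == y)) p.2).
Proof.
rewrite eval_chE /chain_insert pairing_flatten /pairing.
under [RHS]eq_bigr => i _ do rewrite (additive_fun_sum (sgnD i)) big_mkcond.
rewrite exchange_big /=; apply: eq_bigr => -[x m] _ /=.
rewrite big_map /coef_at; have [sy|sy] := eqVneq (size y) (size x).+1.
  rewrite sy sum_iota0_ord; apply: eq_bigr => i _ /=.
  by rewrite -ltnS ltn_ord; case: eqP.
rewrite !big1 // => i _ /=; case: eqP; rewrite ?andbF // => iy;
  by rewrite -iy size_insert_at eqxx in sy.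
Qed.

End Chains.

Section Cochains.
Implicit Types (f g : seq A -> M) (x y : seq A).

Lemma dco_cons f u y : dco act f (u :: y) = bar_diff act f (u :: y).
Proof. by rewrite /dco /bar_diff [size _]/= tail_facesE addrA. Qed.

Lemma dco_map phi f x : Amorphism phi -> dco act (fun w => phi (f w)) x = phi (dco act f x).
Proof.
move=> [phiD phiA]; rewrite /dco !phiD phiA (additive_fun_sum phiD) (additive_fun_sgn phiD).
by congr (_ + _ + _); apply: eq_bigr => i _; rewrite (additive_fun_sgn phiD).
Qed.

Lemma dcoD f g x : dco act (fun w => f w + g w) x = dco act f x + dco act g x.
Proof.
rewrite /dco actD sgnD (eq_bigr (fun i : 'I__ => sgn i.+1 (f (merge_at i x))
  + sgn i.+1 (g (merge_at i x)))) => [|i _]; last exact: sgnD.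
by rewrite big_split /=; abelian.
Qed.

Lemma dco0 x : dco act (fun _ => 0) x = 0.
Proof. by rewrite /dco actr0 sgn0 big1 ?addr0 // => i _; exact: sgn0. Qed.

Lemma cocycle_map k phi f : Amorphism phi -> cocycle act k f -> cocycle act k (fun x => phi (f x)).
Proof. by move=> phiA fcoc x sx; rewrite dco_map // fcoc // (additive_fun0 phiA.1). Qed.

End Cochains.

Section Submodule.
Variable D : M -> Prop.
Hypotheses (D0 : D 0) (DB : forall x y, D x -> D y -> D (x - y))
  (Dmorph : forall phi x, Amorphism phi -> D x -> D (phi x)).

Lemma submodN x : D x -> D (- x).
Proof. by apply: Dmorph; exact: Amorphism_opp. Qed.

Lemma submodD x y : D x -> D y -> D (x + y).
Proof. by move=> Dx Dy; rewrite -[y]opprK; apply: DB => //; apply: submodN. Qed.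

Lemma submod_sum (I : Type) (r : seq I) (P : pred I) (F : I -> M) :
  (forall i, P i -> D (F i)) -> D (\sum_(i <- r | P i) F i).
Proof. by move=> DF; apply: big_ind => //; exact: submodD. Qed.

Lemma submod_sgn k x : D x -> D (sgn k x).
Proof. by rewrite /sgn; case: (odd k) => //; exact: submodN. Qed.

Local Notation chain := (seq (seq A * M)).

Lemma submod_sum_terms (d : chain) (P : pred (seq A)) :
  (forall y, D (eval_ch d y)) -> D (\sum_(p <- d | P p.1) p.2).
Proof. by move=> dD; rewrite sum_by_coef; apply: submod_sum. Qed.

Lemma submod_chain_insert b (d : chain) :
  (forall y, D (eval_ch d y)) -> forall y, D (eval_ch (chain_insert b d) y).
Proof.
move=> dD y; rewrite eval_chain_insert; apply: submod_sum => i _; apply: submod_sgn.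
exact: (submod_sum_terms (fun x => (i <= size x)%N && (insert_at b i x == y)) dD).
Qed.

Lemma rel_cycle_map n phi (c : chain) :
  Amorphism phi -> rel_cycle act D n c -> rel_cycle act D n (map_chain phi c).
Proof.
move=> phiA [cn cD]; split; first by rewrite chain_deg_map.
by move=> y; rewrite bd_map_chain // eval_ch_map; [apply: Dmorph | exact: phiA.1].
Qed.

Definition homologous n (u v : seq A -> M) :=
  exists e, chain_deg n.+1 e /\ forall y, D (u y - v y - eval_ch (bd act e) y).

Lemma homologous_refl n u : homologous n u u.
Proof. by exists [::]; split => // y; rewrite eval_bd_nil subrr subr0. Qed.

Lemma homologous_ext n u v u' v' :
  u =1 u' -> v =1 v' -> homologous n u v -> homologous n u' v'.
Proof. by move=> uu' vv' [e [en eD]]; exists e; split => // y; rewrite -uu' -vv'. Qed.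

Lemma homologous_add n u1 v1 u2 v2 : homologous n u1 v1 -> homologous n u2 v2 ->
  homologous n (fun y => u1 y + u2 y) (fun y => v1 y + v2 y).
Proof.
move=> [e1 [e1n e1D]] [e2 [e2n e2D]]; exists (e1 ++ e2).
rewrite chain_deg_cat e1n e2n; split => // y; rewrite bd_cat eval_ch_cat.
set E1 := eval_ch (bd act e1) y; set E2 := eval_ch (bd act e2) y.
have -> : u1 y + u2 y - (v1 y + v2 y) - (E1 + E2) = u1 y - v1 y - E1 + (u2 y - v2 y - E2).
  by abelian.
exact: submodD.
Qed.

Lemma homologous_trans n u v w : homologous n u v -> homologous n v w -> homologous n u w.
Proof.
move=> [e1 [e1n e1D]] [e2 [e2n e2D]]; exists (e1 ++ e2).
rewrite chain_deg_cat e1n e2n; split => // y; rewrite bd_cat eval_ch_cat.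
set E1 := eval_ch (bd act e1) y; set E2 := eval_ch (bd act e2) y.
have -> : u y - w y - (E1 + E2) = u y - v y - E1 + (v y - w y - E2) by abelian.
exact: submodD.
Qed.

Lemma homologous_map n phi u v : Amorphism phi -> homologous n u v ->
  homologous n (fun y => phi (u y)) (fun y => phi (v y)).
Proof.
move=> [phiD phiA] [e [en eD]]; exists (map_chain phi e).
rewrite chain_deg_map; split => // y; rewrite bd_map_chain // eval_ch_map //.
by rewrite -!(additive_funN phiD) -!phiD; apply: Dmorph.
Qed.

Lemma homologous_act n b c : rel_cycle act D n c ->
  homologous n (fun y => act b (eval_ch c y)) (eval_ch c).
Proof.
move=> [cn cD]; exists (chain_insert (- b) c); split; first exact: chain_deg_insert.
move=> y; have := eval_bd_chain_insert (- b) c y; rewrite opprK => <-.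
by rewrite addrC addKr; apply: submod_chain_insert.
Qed.

Lemma homologous_orbit_sum n r c j : rel_cycle act D n c ->
  homologous n (fun y => orbit_sum r j (eval_ch c y)) (fun y => eval_ch c y *+ j).
Proof.
move=> cD; elim: j => [|j IH].
  apply: homologous_ext (homologous_refl n (fun _ => 0)) => y;
  by rewrite /orbit_sum ?big_ord0 ?mulr0n.
apply: homologous_ext (homologous_add IH (homologous_act (r *+ j) cD)) => y.
  by rewrite /orbit_sum big_ord_recr.
by rewrite mulrSr.
Qed.

Lemma homologous_average_seq n t c : rel_cycle act D n c ->
  homologous n (fun y => average_seq t (eval_ch c y)) (eval_ch c).
Proof.
elim: t c => [|r t IH] c cD /=; first exact: homologous_refl.
apply: homologous_trans (IH c cD).
have tA := Amorphism_average_seq t.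
have c'D := rel_cycle_map tA cD.
have c'E y : eval_ch (map_chain (average_seq t) c) y = average_seq t (eval_ch c y).
  exact: eval_ch_map tA.1.
apply: homologous_ext (homologous_map Amorphism_inv (homologous_orbit_sum r l c'D)) => y /=.
  by rewrite c'E.
by rewrite invK c'E.
Qed.

Definition cohomologous k (f g : seq A -> M) :=
  exists h, valued_in D k h /\ forall x, size x = k.+1 -> f x - g x = dco act h x.

Lemma cohomologous_refl k f : cohomologous k f f.
Proof. by exists (fun _ => 0); split => [x _|x _]; rewrite ?subrr ?dco0. Qed.

Lemma cohomologous_ext k f g f' g' :
  f =1 f' -> g =1 g' -> cohomologous k f g -> cohomologous k f' g'.
Proof. by move=> ff' gg' [h [hD fgh]]; exists h; split => // x sx; rewrite -ff' -gg' fgh. Qed.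

Lemma cohomologous_add k f1 g1 f2 g2 : cohomologous k f1 g1 -> cohomologous k f2 g2 ->
  cohomologous k (fun x => f1 x + f2 x) (fun x => g1 x + g2 x).
Proof.
move=> [h1 [h1D fgh1]] [h2 [h2D fgh2]]; exists (fun w => h1 w + h2 w).
split => [x sx|x sx]; first by apply: submodD; [apply: h1D | apply: h2D].
by rewrite dcoD -fgh1 // -fgh2 // opprD addrACA.
Qed.

Lemma cohomologous_trans k f g h : cohomologous k f g -> cohomologous k g h -> cohomologous k f h.
Proof.
move=> [h1 [h1D fgh1]] [h2 [h2D fgh2]]; exists (fun w => h1 w + h2 w).
split => [x sx|x sx]; first by apply: submodD; [apply: h1D | apply: h2D].
by rewrite dcoD -fgh1 // -fgh2 // addrA subrK.
Qed.

Lemma cohomologous_map k phi f g : Amorphism phi -> cohomologous k f g ->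
  cohomologous k (fun x => phi (f x)) (fun x => phi (g x)).
Proof.
move=> phiA [h [hD fgh]]; exists (fun w => phi (h w)).
split => [x sx|x sx]; first by apply: Dmorph => //; apply: hD.
by rewrite dco_map // -fgh // phiA.1 (additive_funN phiA.1).
Qed.

Lemma cohomologous_act k b f : valued_in D k.+1 f -> cocycle act k.+1 f ->
  cohomologous k (fun x => act b (f x)) f.
Proof.
move=> fD fcoc; exists (insert_sum b f); split.
  by move=> y sy; apply: insert_sum_closed => // w sw; apply: fD; rewrite sw sy.
case=> [|u y] // sx; rewrite -(bar_diff_insert_sum b _ _ actD) dco_cons.
rewrite (insert_sum_eq0 b) ?addr0 // => -[|w0 w] // sw.
by rewrite -dco_cons fcoc // sw sx.
Qed.

Lemma cohomologous_orbit_sum k r f j : valued_in D k.+1 f -> cocycle act k.+1 f ->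
  cohomologous k (fun x => orbit_sum r j (f x)) (fun x => f x *+ j).
Proof.
move=> fD fcoc; elim: j => [|j IH].
  apply: cohomologous_ext (cohomologous_refl k (fun _ => 0)) => x;
  by rewrite /orbit_sum ?big_ord0 ?mulr0n.
apply: cohomologous_ext (cohomologous_add IH (cohomologous_act (r *+ j) fD fcoc)) => x.
  by rewrite /orbit_sum big_ord_recr.
by rewrite mulrSr.
Qed.

Lemma cohomologous_average_seq k t f : valued_in D k.+1 f -> cocycle act k.+1 f ->
  cohomologous k (fun x => average_seq t (f x)) f.
Proof.
elim: t f => [|r t IH] f fD fcoc /=; first exact: cohomologous_refl.
apply: cohomologous_trans (IH f fD fcoc).
have tA := Amorphism_average_seq t.
have f'D : valued_in D k.+1 (fun x => average_seq t (f x)).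
  by move=> x sx; apply: Dmorph => //; apply: fD.
have := cohomologous_map Amorphism_inv (cohomologous_orbit_sum r l f'D (cocycle_map tA fcoc)).
by apply: cohomologous_ext => x //=; rewrite invK.
Qed.

End Submodule.

Section Coinvariants.
Variable C : pred A.

Lemma coinv_rel0 : coinv_rel act C 0.
Proof. by exists [::]; rewrite big_nil. Qed.

Lemma coinv_relD x y : coinv_rel act C x -> coinv_rel act C y -> coinv_rel act C (x + y).
Proof.
move=> [s1 [s1C ->]] [s2 [s2C ->]]; exists (s1 ++ s2).
by rewrite all_cat s1C s2C big_cat.
Qed.

Lemma coinv_rel_morph phi x :
  Amorphism phi -> coinv_rel act C x -> coinv_rel act C (phi x).
Proof.
move=> [phiD phiA] [s1 [s1C ->]]; exists [seq (p.1, phi p.2) | p <- s1].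
rewrite all_map big_map (additive_fun_sum phiD); split=> //.
by apply: eq_bigr => p _ /=; rewrite phiD (additive_funN phiD) phiA.
Qed.

Lemma coinv_relB x y : coinv_rel act C x -> coinv_rel act C y -> coinv_rel act C (x - y).
Proof.
by move=> Cx Cy; apply: coinv_relD => //; apply: coinv_rel_morph Cy; exact: Amorphism_opp.
Qed.

Lemma coinv_relN x : coinv_rel act C x -> coinv_rel act C (- x).
Proof. exact: (@submodN (coinv_rel act C) (@coinv_rel_morph)). Qed.

Lemma coinv_rel_sum (I : Type) (r : seq I) (P : pred I) (F : I -> M) :
  (forall i, P i -> coinv_rel act C (F i)) -> coinv_rel act C (\sum_(i <- r | P i) F i).
Proof. exact: (@submod_sum (coinv_rel act C) coinv_rel0 (@coinv_relB) (@coinv_rel_morph)). Qed.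

Lemma coinv_rel_gen b m : b \in C -> coinv_rel act C (m - act b m).
Proof. by move=> Cb; exists [:: (b, m)]; rewrite /= Cb big_seq1. Qed.

Lemma invariants0 : invariants act C 0.
Proof. by move=> b _; rewrite actr0. Qed.

Lemma invariantsB x y : invariants act C x -> invariants act C y -> invariants act C (x - y).
Proof. by move=> Cx Cy b Cb; rewrite actD actrN Cx ?Cy. Qed.

Lemma invariants_morph phi x :
  Amorphism phi -> invariants act C x -> invariants act C (phi x).
Proof. by move=> [_ phiA] Cx b Cb; rewrite -phiA Cx. Qed.

End Coinvariants.

Lemma average_seq_sub_coinv t m : coinv_rel act predT (average_seq t m - m).
Proof.
elim: t => [|r t IH] /=; first by rewrite subrr; exact: coinv_rel0.
set y := average_seq t m.
have -> : average r y - m = (average r y - y) + (y - m) by rewrite addrA subrK.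
apply: coinv_relD => //.
rewrite /average -[y in _ - y]invK -(additive_funN Amorphism_inv.1) -Amorphism_inv.1.
apply: coinv_rel_morph Amorphism_inv _.
have -> : y *+ l = \sum_(j < l) y by rewrite sumr_const card_ord.
rewrite /orbit_sum -sumrB.
by apply: coinv_rel_sum => j _; rewrite -opprB; apply/coinv_relN/coinv_rel_gen.
Qed.

Lemma cocycle0_invariant f : cocycle act 0 f -> invariants act predT (f [::]).
Proof.
move=> fcoc b _; have /eqP := fcoc [:: b] erefl.
by rewrite /dco /= big_ord0 addr0 /sgn /= subr_eq0 => /eqP.
Qed.

Section FiniteIndex.
Variables (B : pred A) (s : seq A).
Hypotheses (cosetsB : forall a, exists2 b, b \in s & a - b \in B)
  (mulrn_in : forall a, a *+ l \in B).

Lemma average_coinv_sub_act r m : coinv_rel act B (average r (m - act r m)).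
Proof.
have [orbD orbA] := Amorphism_orbit_sum r l.
rewrite /average orbD (additive_funN orbD) orbA orbit_sum_sub_act.
by apply: coinv_rel_morph Amorphism_inv _; exact: coinv_rel_gen.
Qed.

Lemma average_seq_coinv_sub_act t r m : r \in t ->
  coinv_rel act B (average_seq t (m - act r m)).
Proof.
elim: t => [|r' t IH] //; rewrite inE => /predU1P [<- | rt] /=.
  have [tD tA] := Amorphism_average_seq t.
  by rewrite tD (additive_funN tD) tA; exact: average_coinv_sub_act.
by apply: coinv_rel_morph (Amorphism_average r') _; exact: IH.
Qed.

(* Writing a = (a - r) + r with r in s and a - r in B splits m - a m into
   m - r m, which the averaging over s maps into I_B M, and a term of I_B M. *)
Lemma average_seq_coinv m : coinv_rel act predT m -> coinv_rel act B (average_seq s m).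
Proof.
have [sD sA] := Amorphism_average_seq s.
move=> [gens [_ ->]]; rewrite (additive_fun_sum sD).
apply: coinv_rel_sum => -[a m'] _ /=.
have [r rs arB] := cosetsB a.
rewrite -[a](subrK r) actM.
have -> : m' - act (a - r) (act r m') =
  (m' - act r m') + (act r m' - act (a - r) (act r m')) by rewrite addrA subrK.
rewrite sD; apply: coinv_relD; first exact: average_seq_coinv_sub_act.
exact: coinv_rel_morph (Amorphism_average_seq s) (coinv_rel_gen _ arB).
Qed.

Lemma act_average_invariant r y : invariants act B y -> act r (average r y) = average r y.
Proof.
move=> yB; rewrite /average -Amorphism_inv.2; congr (inv _).
by apply/eqP; rewrite eq_sym -subr_eq0 orbit_sum_sub_act yB ?subrr.
Qed.

Lemma average_seq_invariants m :
  invariants act B m -> invariants act predT (average_seq s m).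
Proof.
move=> mB.
have tB t : invariants act B (average_seq t m).
  exact: invariants_morph (Amorphism_average_seq t) mB.
have fixed t r : r \in t -> act r (average_seq t m) = average_seq t m.
  elim: t => [|r' t IH] //; rewrite inE => /predU1P [-> | rt] /=.
    exact: act_average_invariant.
  by rewrite -(Amorphism_average r').2 IH.
move=> a _; have [r rs arB] := cosetsB a.
by rewrite -(subrK r a) actM fixed // tB.
Qed.

Lemma homology_iso n : homology_map_iso act (coinv_rel act B) (coinv_rel act predT) n.
Proof.
have sAm := Amorphism_average_seq s; have [sD _] := sAm.
have avg_homologous :=
  homologous_average_seq (coinv_rel0 B) (@coinv_relB B) (@coinv_rel_morph B).
split=> [c cB [e [en ceA]] | c cA].
  have [e' [e'n cc'e']] := avg_homologous n s c cB.
  exists (map_chain (average_seq s) e ++ map_chain -%R e'); split.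
    by rewrite chain_deg_cat !chain_deg_map en e'n.
  move=> y; rewrite bd_cat eval_ch_cat !bd_map_chain //; last exact: Amorphism_opp.
  rewrite !eval_ch_map //; last exact: opprD.
  have := coinv_relB (average_seq_coinv (ceA y)) (cc'e' y); rewrite sD (additive_funN sD).
  by congr coinv_rel; abelian.
exists (map_chain (average_seq s) c); split.
  case: cA => cn cA; split; first by rewrite chain_deg_map.
  by move=> y; rewrite bd_map_chain // eval_ch_map //; exact: average_seq_coinv.
exists [::]; split=> // y; rewrite eval_bd_nil subr0 (eval_ch_map _ _ sD) -opprB.
exact/coinv_relN/average_seq_sub_coinv.
Qed.

Lemma cohomology_iso n : cohomology_map_iso act (invariants act predT) (invariants act B) n.
Proof.
have sAm := Amorphism_average_seq s.
split=> [f fA fcoc | f fB fcoc].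
  case: n fA fcoc => [|k] // fA fcoc [g [gB fg]].
  exists (fun w => average_seq s (g w)); split=> [x sx | x sx].
    by apply: average_seq_invariants; apply: gB.
  by rewrite dco_map // -fg // average_seq_invariant //; apply: fA.
exists (fun x => average_seq s (f x)); split=> [x sx|].
  by apply: average_seq_invariants; apply: fB.
split; first exact: cocycle_map sAm fcoc.
case: n fB fcoc => [|k] fB fcoc.
  by case=> // _; rewrite average_seq_invariant ?subrr //; exact: cocycle0_invariant.
have [g [gB fg]] := cohomologous_average_seq (@invariants0 B) (@invariantsB B)
  (@invariants_morph B) s fB fcoc.
exists (fun w => - g w); split=> [x sx | x sx].
  by apply: invariants_morph Amorphism_opp _; apply: gB.
by rewrite dco_map; [rewrite -fg // opprB | exact: Amorphism_opp].
Qed.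

End FiniteIndex.

End ZmodAction.

Theorem theorem1p5 (A : zmodType) (B : pred A) (l : nat)
    (M : zmodType) (act : A -> M -> M) :
  (0 < l)%N ->
  (* B is a subgroup of A *)
  0 \in B -> (forall x y, x \in B -> y \in B -> x - y \in B) ->
  (* A/B is finite *)
  (exists s : seq A, forall a, exists2 b, b \in s & a - b \in B) ->
  (* A/B is l-torsion *)
  (forall a, a *+ l \in B) ->
  (* M is a Z[1/l]-module, i.e. multiplication by l is bijective on M *)
  bijective (fun m : M => m *+ l) ->
  (* act is an action of A on M by additive maps *)
  (forall a x y, act a (x + y) = act a x + act a y) ->
  (forall x, act 0 x = x) ->
  (forall a b x, act (a + b) x = act a (act b x)) ->
  forall n : nat,
    homology_map_iso act (coinv_rel act B) (coinv_rel act predT) n /\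
    cohomology_map_iso act (invariants act predT) (invariants act B) n.
Proof.
move=> _ _ _ [s cosetsB] mulrn_in [inv invK mulrnK] actD act0 actM n.
by split; [apply: (homology_iso actD act0 actM invK mulrnK cosetsB mulrn_in)
          | apply: (cohomology_iso actD act0 actM invK mulrnK cosetsB mulrn_in)].
Qed.
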